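(* Let $A\ge2$, $H\ge5$ and $S\ge A^{(1-1/e)H}$. Then there exists an episodic tabular MDP with $S$ states, $A$ actions, horizon $H$ and deterministic rewards in $\{0,1\}$ such that $$\frac{V^{0,*}}{V^{T,*}}\le\frac{2}{(A-1)^{(1-1/e)H-3}}.$$ Here $V^{0,*}$ is the optimal value of Markovian (no-lookahead) policies and $V^{T,*}$ is the optimal value of one-step transition-lookahead policies.
   Context: Episodic tabular MDP: finite state space of size $S$, finite action space of size $A$, horizon $H$, initial state distribution, transition kernels $P_h(\cdot\mid s,a)$, and non-negative rewards. The value of a policy is the expected sum of rewards over steps $1,\dots,H$. A no-lookahead (Markovian) policy chooses $a_h$ based only on $h$ and $s_h$. For each $(h,s,a)$, the next state $s'_{h}(s,a)\sim P_h(\cdot\mid s,a)$ is drawn independently across $h$, and transitions are independent of rewards. If the agent is at $s_h$ and plays $a_h$, then $s_{h+1}=s'_h(s_h,a_h)$. A one-step transition-lookahead policy, at step $h$ in state $s_h$, observes the realized next states $\{s'_h(s_h,a)\}_{a\in\mathcal A}$ for all actions before choosing $a_h$. It has no reward lookahead. *)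

From HB Require Import structures.
From mathcomp Require Import all_boot all_order all_algebra.
From mathcomp Require Import all_classical all_reals all_analysis.
Set Implicit Arguments. Unset Strict Implicit. Unset Printing Implicit Defensive.
Import Order.TTheory GRing.Theory Num.Theory.
Local Open Scope ring_scope.

Record mdp (R : realType) (S A H : nat) := MDP {
  init  : {ffun 'I_S -> R};
  trans : 'I_H -> 'I_S -> 'I_A -> {ffun 'I_S -> R};
  rew   : 'I_H -> 'I_S -> 'I_A -> R
}.

Definition is_distr (R : realType) (T : finType) (p : {ffun T -> R}) : Prop :=
  (forall x, 0 <= p x) /\ \sum_(x : T) p x = 1.

Definition valid_mdp01 (R : realType) (S A H : nat) (M : mdp R S A H) : Prop :=
  is_distr (init M) /\
  (forall h s a, is_distr (trans M h s a)) /\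
  (forall h s a, rew M h s a = 0 \/ rew M h s a = 1).

Definition markov_policy (S A H : nat) := {ffun 'I_H -> {ffun 'I_S -> 'I_A}}.

Definition markov_step (R : realType) (S A H : nat) (M : mdp R S A H)
  (pi : markov_policy S A H) (h : 'I_H) (V : 'I_S -> R) : 'I_S -> R :=
  fun s => let a := pi h s in
    rew M h s a + \sum_(s' : 'I_S) trans M h s a s' * V s'.

(* backward induction: foldr over steps 0,..,H-1 composes step 0 outermost *)
Definition markov_value (R : realType) (S A H : nat) (M : mdp R S A H)
  (pi : markov_policy S A H) : R :=
  \sum_(s : 'I_S) init M s *
     foldr (markov_step M pi) (fun _ => 0) (enum 'I_H) s.

Definition opt_markov (R : realType) (S A H : nat) (M : mdp R S A H) : R :=
  \big[Num.max/0]_(pi : markov_policy S A H) markov_value M pi.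

(* One-step transition-lookahead policies: at step h in state s, the agent
   observes the vector sigma = (s'_h(s,a))_a of realized next states for all
   actions and chooses a_h = pi h s sigma. *)
Definition lookahead_policy (S A H : nat) :=
  {ffun 'I_H -> {ffun 'I_S -> {ffun {ffun 'I_A -> 'I_S} -> 'I_A}}}.

Definition lookahead_step (R : realType) (S A H : nat) (M : mdp R S A H)
  (pi : lookahead_policy S A H) (h : 'I_H) (V : 'I_S -> R) : 'I_S -> R :=
  fun s => \sum_(sigma : {ffun 'I_A -> 'I_S})
     (\prod_(a : 'I_A) trans M h s a (sigma a)) *
     (let a := pi h s sigma in rew M h s a + V (sigma a)).

Definition lookahead_value (R : realType) (S A H : nat) (M : mdp R S A H)
  (pi : lookahead_policy S A H) : R :=
  \sum_(s : 'I_S) init M s *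
     foldr (lookahead_step M pi) (fun _ => 0) (enum 'I_H) s.

Definition opt_lookahead (R : realType) (S A H : nat) (M : mdp R S A H) : R :=
  \big[Num.max/0]_(pi : lookahead_policy S A H) lookahead_value M pi.

From HB Require Import structures.
From mathcomp Require Import all_boot all_order all_algebra.
From mathcomp Require Import all_classical all_reals all_analysis.
From mathcomp Require Import lra.
Import Order.TTheory GRing.Theory Num.Theory.
Local Open Scope ring_scope.

(* The witness has two relevant states, [good] and an absorbing [trap]: from [good]
   every action stays in [good] with probability [p] and otherwise falls into [trap],
   and the only reward is for being in [good] at the last step.  A Markovian agent
   thus scores [p ^ (H - 1)], whereas a lookahead agent sees the realized next states
   and falls only when all [A] actions fail, scoring [(1 - (1 - p) ^ A) ^ (H - 1)].
   For [p = 1 / A ^ 2], Bernoulli's inequality gives [1 - (1 - p) ^ A >= p (A - 1)],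
   so the ratio is at most [(A - 1) ^ (1 - H)], and [(1 - 1/e) H - 3 <= H - 1].
   The lower bound on [S] is only used to provide two distinct states. *)

Lemma sumr_delta {R : pzRingType} {T : finType} (j : T) (F : T -> R) :
  \sum_i (i == j)%:R * F i = F j.
Proof.
under eq_bigr do rewrite mulr_natl mulrb.
by rewrite -big_mkcond big_pred1_eq.
Qed.

Lemma sumr_delta1 {R : pzRingType} {T : finType} (j : T) :
  \sum_i (i == j)%:R = 1 :> R.
Proof. by rewrite -[RHS](sumr_delta j (fun=> 1)); apply: eq_bigr => i _ /=; rewrite mulr1. Qed.

Lemma expr_1subr_bernoulli {R : realDomainType} {p : R} (k : nat) :
  0 <= p <= 1 -> (1 - p) ^+ k * (1 + k%:R * p) <= 1.
Proof.
move=> /andP[p0 p1]; elim: k => [|k IH]; first by rewrite expr0 mul0r addr0 mul1r.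
have Y0 : 0 <= (1 - p) ^+ k by rewrite exprn_ge0 // subr_ge0.
have K0 : 0 <= k%:R :> R by [].
rewrite exprS -natr1.
set Y := (1 - p) ^+ k in Y0 IH *.
have : 0 <= Y * (p * p * (k%:R + 1)) by rewrite !mulr_ge0 ?addr_ge0.
nra.
Qed.

Lemma foldr_enum_ord_geometric {R : pzRingType} {T : Type} {H : nat}
    {f : 'I_H.+1 -> (T -> R) -> T -> R} {e : T -> R} {r : R} :
  f ord_max (fun _ => 0) = e ->
  (forall h c, h != ord_max -> f h (fun t => c * e t) = (fun t => c * r * e t)) ->
  foldr f (fun _ => 0) (enum 'I_H.+1) = (fun t => r ^+ H * e t).
Proof.
move=> f_last f_scale.
have scale_l (l : seq 'I_H.+1) c : all (fun h => h != ord_max) l ->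
    foldr f (fun t => c * e t) l = (fun t => c * r ^+ size l * e t).
  elim: l => [_|h l IH /andP[h_last l_last]] /=.
    by apply: funext => t; rewrite mulr1.
  by rewrite IH // f_scale // exprSr mulrA.
rewrite enum_ordSr -cats1 foldr_cat /= f_last.
transitivity (foldr f (fun t => 1 * e t) [seq widen_ord (leqnSn H) i | i <- enum 'I_H]).
  by congr foldr; apply: funext => t; rewrite mul1r.
rewrite scale_l; last first.
  by apply/allP => _ /mapP[i _ ->]; rewrite -(inj_eq val_inj) /= neq_ltn ltn_ord.
by rewrite size_map size_enum_ord; apply: funext => t; rewrite mul1r.
Qed.

Section TrapMDP.
Context {R : realType} {S A H : nat} {good trap : 'I_S} {p : R}.
Hypothesis good_neq_trap : good != trap.
Hypothesis p01 : 0 <= p <= 1.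

Definition trap_trans (s : 'I_S) : {ffun 'I_S -> R} :=
  [ffun s' => if s == good then (s' == good)%:R * p + (s' == trap)%:R * (1 - p)
              else (s' == trap)%:R].

Definition trap_mdp : mdp R S A H.+1 :=
  MDP [ffun s => (s == good)%:R] (fun _ s _ => trap_trans s)
      (fun h s _ => ((h == ord_max) && (s == good))%:R).

Lemma trap_trans_good s : trap_trans s good = (s == good)%:R * p.
Proof.
by rewrite ffunE eqxx (negbTE good_neq_trap); case: (s == good);
  rewrite ?mul0r ?addr0 ?mul1r.
Qed.

Lemma trap_trans_distr s : is_distr (trap_trans s).
Proof.
case/andP: p01 => p0 p1; split=> [s'|].
  rewrite ffunE; case: (s == good) => //.
  by rewrite addr_ge0 ?mulr_ge0 ?subr_ge0.
under eq_bigr do rewrite ffunE.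
case: (s == good); last exact: sumr_delta1.
by rewrite big_split /= !sumr_delta addrC subrK.
Qed.

Lemma trap_mdp_valid : valid_mdp01 trap_mdp.
Proof.
split; [split | split=> [h s a | h s a]]; rewrite /= ?ffunE.
- by move=> s; rewrite ffunE.
- by under eq_bigr do rewrite ffunE; exact: sumr_delta1.
- exact: trap_trans_distr.
- by case: (_ && _); [right | left].
Qed.

Section Markov.
Variable pi : markov_policy S A H.+1.

Lemma markov_step_last :
  markov_step trap_mdp pi ord_max (fun=> 0) = (fun s => (s == good)%:R).
Proof.
apply: funext => s; rewrite /markov_step /= eqxx big1 ?addr0 // => s' _.
by rewrite mulr0.
Qed.

Lemma markov_step_scale h c : h != ord_max ->
  markov_step trap_mdp pi h (fun s => c * (s == good)%:R)
  = (fun s => c * p * (s == good)%:R).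
Proof.
move=> h_last; apply: funext => s; rewrite /markov_step /= (negbTE h_last) add0r.
under eq_bigr do rewrite mulrCA.
rewrite -mulr_sumr; under eq_bigr do rewrite mulrC.
by rewrite sumr_delta trap_trans_good mulrCA mulrC.
Qed.

Lemma markov_value_trap : markov_value trap_mdp pi = p ^+ H.
Proof.
rewrite /markov_value (foldr_enum_ord_geometric markov_step_last markov_step_scale).
under eq_bigr do rewrite ffunE.
by rewrite sumr_delta eqxx mulr1.
Qed.

End Markov.

Lemma opt_markov_trap : opt_markov trap_mdp <= p ^+ H.
Proof.
case/andP: p01 => p0 _.
by apply: bigmax_le => [|pi _]; rewrite ?exprn_ge0 ?markov_value_trap.
Qed.

Section Lookahead.
Variable a0 : 'I_A.

Definition greedy_action (sigma : {ffun 'I_A -> 'I_S}) : 'I_A :=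
  odflt a0 [pick a | sigma a == good].

Definition greedy_policy : lookahead_policy S A H.+1 :=
  [ffun=> [ffun=> finfun greedy_action]].

Lemma greedy_action_good (sigma : {ffun 'I_A -> 'I_S}) :
  (sigma (greedy_action sigma) == good)%:R = 1 - \prod_a (sigma a != good)%:R :> R.
Proof.
rewrite /greedy_action; case: pickP => [a sa_good | no_good] /=.
  by rewrite sa_good (bigD1 a) //= sa_good mul0r subr0.
by rewrite no_good big1 ?subrr // => a _; rewrite no_good.
Qed.

Lemma sum_prod_trap_trans s :
  \sum_(sigma : {ffun 'I_A -> 'I_S}) \prod_a trap_trans s (sigma a) = 1.
Proof.
rewrite -(bigA_distr_bigA (fun _ => trap_trans s)) /=.
by rewrite big1 // => a _; case: (trap_trans_distr s).
Qed.

Lemma trap_trans_escape :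
  \sum_s' trap_trans good s' * (s' != good)%:R = 1 - p.
Proof.
have -> : \sum_s' trap_trans good s' * (s' != good)%:R
    = \sum_s' trap_trans good s' - \sum_s' (s' == good)%:R * trap_trans good s'.
  rewrite -sumrB; apply: eq_bigr => s' _.
  by case: (s' == good); rewrite /= ?mulr1 ?mul1r ?subrr ?mulr0 ?mul0r ?subr0.
case: (trap_trans_distr good) => _ ->.
by rewrite sumr_delta trap_trans_good eqxx mul1r.
Qed.

Lemma lookahead_step_last :
  lookahead_step trap_mdp greedy_policy ord_max (fun=> 0) = (fun s => (s == good)%:R).
Proof.
apply: funext => s; rewrite /lookahead_step /= eqxx.
under eq_bigr do rewrite addr0 mulrC.
by rewrite -mulr_sumr sum_prod_trap_trans mulr1.
Qed.

Lemma lookahead_step_scale h c : h != ord_max ->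
  lookahead_step trap_mdp greedy_policy h (fun s => c * (s == good)%:R)
  = (fun s => c * (1 - (1 - p) ^+ A) * (s == good)%:R).
Proof.
move=> h_last; apply: funext => s; rewrite /lookahead_step /= (negbTE h_last).
under eq_bigr do rewrite !ffunE add0r.
have [-> | s_bad] := eqVneq s good; last first.
  rewrite mulr0 big1 // => sigma _.
  have [sa_good | _] := eqVneq (sigma (greedy_action sigma)) good; last by rewrite !mulr0.
  rewrite (bigD1 (greedy_action sigma)) //= ffunE (negbTE s_bad) sa_good.
  by rewrite (negbTE good_neq_trap) !mul0r.
under eq_bigr do rewrite greedy_action_good mulrCA mulrBr mulr1 -big_split.
rewrite -mulr_sumr sumrB sum_prod_trap_trans.
rewrite -(bigA_distr_bigA (fun _ s' => trap_trans good s' * (s' != good)%:R)) /=.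
under eq_bigr do rewrite trap_trans_escape.
by rewrite prodr_const card_ord mulr1.
Qed.

Lemma lookahead_value_greedy :
  lookahead_value trap_mdp greedy_policy = (1 - (1 - p) ^+ A) ^+ H.
Proof.
rewrite /lookahead_value.
rewrite (foldr_enum_ord_geometric lookahead_step_last lookahead_step_scale).
under eq_bigr do rewrite ffunE.
by rewrite sumr_delta eqxx mulr1.
Qed.

End Lookahead.

Lemma opt_lookahead_trap (a0 : 'I_A) : (1 - (1 - p) ^+ A) ^+ H <= opt_lookahead trap_mdp.
Proof.
rewrite -(lookahead_value_greedy a0).
exact: (le_bigmax _ (lookahead_value trap_mdp) (greedy_policy a0)).
Qed.

Lemma trap_value_ratio (a0 : 'I_A) : 0 < 1 - (1 - p) ^+ A ->
  opt_markov trap_mdp / opt_lookahead trap_mdp <= (p / (1 - (1 - p) ^+ A)) ^+ H.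
Proof.
move=> q_gt0; have q_pos : 0 < (1 - (1 - p) ^+ A) ^+ H by rewrite exprn_gt0.
have L_pos := lt_le_trans q_pos (opt_lookahead_trap a0).
have pH_ge0 : 0 <= p ^+ H by case/andP: p01 => p0 _; rewrite exprn_ge0.
rewrite expr_div_n ler_pdivrMr // mulrAC ler_pdivlMr //.
apply: (le_trans (ler_wpM2r (ltW q_pos) opt_markov_trap)).
exact: ler_wpM2l (opt_lookahead_trap a0).
Qed.

End TrapMDP.

Lemma inv_sqr_hit_ratio {R : realFieldType} {k : nat} {p : R} :
  (1 < k)%N -> p = (k%:R ^+ 2)^-1 ->
  [/\ 0 <= p <= 1, 0 < 1 - (1 - p) ^+ k & p / (1 - (1 - p) ^+ k) <= (k%:R - 1)^-1].
Proof.
move=> k_gt1 -> {p}; set p := (k%:R ^+ 2)^-1.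
have k1 : 1 <= k%:R :> R by rewrite ler1n ltnW.
have k0 : 0 < k%:R :> R by rewrite ltr0n ltnW.
have pk : p * (k%:R * k%:R) = 1 by rewrite -expr2 mulVf // expf_neq0 // gt_eqF.
have p_gt0 : 0 < p by rewrite invr_gt0 exprn_gt0.
have p1 : p <= 1 by rewrite invf_le1 ?exprn_ege1 ?exprn_gt0.
have p01 : 0 <= p <= 1 by rewrite (ltW p_gt0) p1.
have Y0 : 0 <= (1 - p) ^+ k by rewrite exprn_ge0 // subr_ge0.
have := expr_1subr_bernoulli k p01; move: ((1 - p) ^+ k) Y0 => Y Y0 bern.
(* [(1 + k p) (1 - p (k - 1)) = 1 + k p^2 >= 1] because [p k^2 = 1]. *)
have q_ge : p * (k%:R - 1) <= 1 - Y by nra.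
have k1_gt0 : 0 < k%:R - 1 :> R by rewrite subr_gt0 ltr1n.
have q_gt0 : 0 < 1 - Y by apply: lt_le_trans q_ge; rewrite mulr_gt0.
by split=> //; rewrite ler_pdivrMr // ler_pdivlMl // mulrC.
Qed.

Lemma expr_le_div_powR {R : realType} {x r : R} (H : nat) :
  1 <= x -> 0 <= r -> r <= x^-1 ->
  r ^+ H <= 2 / x `^ ((1 - (expR 1)^-1) * H.+1%:R - 3).
Proof.
move=> x1 r0 r_le; set X := x `^ _.
have x0 : 0 < x by apply: lt_le_trans x1.
have X_le : X <= x ^+ H.
  rewrite /X -powR_mulrn ?(ltW x0) //; apply: ler_powR => //.
  have : 0 <= (expR 1 : R)^-1 by rewrite invr_ge0 expR_ge0.
  have : 0 <= H%:R :> R by [].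
  rewrite -natr1; nra.
have X_gt0 : 0 < X by rewrite powR_gt0.
apply: le_trans (lerXn2r H _ _ r_le) _; rewrite ?nnegrE ?invr_ge0 ?(ltW x0) //.
apply: (@le_trans _ _ X^-1); first by rewrite exprVn lef_pV2 ?posrE ?exprn_gt0.
by rewrite ler_peMl ?ler1n ?invr_ge0 ?(ltW X_gt0).
Qed.

Lemma two_le_of_powR_le {R : realType} {A H S : nat} : (2 <= A)%N -> (5 <= H)%N ->
  (A%:R : R) `^ ((1 - (expR 1)^-1) * H%:R) <= S%:R -> (2 <= S)%N.
Proof.
move=> A2 H5 AS; rewrite -(ler_nat R); apply: le_trans AS.
apply: le_trans (le1r_powR _ _); rewrite ?ler_nat ?ler1n ?(leq_trans _ A2) //.
have e2 : 2 <= expR 1 :> R by have := expR_ge1Dx (1 : R).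
have e_inv : (expR 1 : R)^-1 <= 2^-1 by rewrite lef_pV2 ?posrE ?expR_gt0.
have : 5 <= H%:R :> R by rewrite (ler_nat R 5).
nra.
Qed.

Theorem mainTheorem6 (R : realType) (S A H : nat) :
  (2 <= A)%N -> (5 <= H)%N ->
  (A%:R : R) `^ ((1 - (expR 1)^-1) * H%:R) <= S%:R ->
  exists M : mdp R S A H,
    valid_mdp01 M /\
    0 < opt_lookahead M /\
    opt_markov M / opt_lookahead M
      <= 2 / ((A%:R - 1) `^ ((1 - (expR 1)^-1) * H%:R - 3)).
Proof.
move=> A2 H5 AS; have S2 := two_le_of_powR_le A2 H5 AS.
case: H H5 {AS} => // H _.
pose good : 'I_S := Ordinal (ltnW S2); pose trap : 'I_S := Ordinal S2.
have good_neq_trap : good != trap by [].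
pose a0 : 'I_A := Ordinal (ltnW A2).
pose p : R := (A%:R ^+ 2)^-1.
have [p01 q_gt0 ratio] := inv_sqr_hit_ratio A2 (erefl p).
exists (@trap_mdp R S A H good trap p); split; first exact: trap_mdp_valid.
split; first by apply: lt_le_trans (opt_lookahead_trap good_neq_trap p01 a0); rewrite exprn_gt0.
apply: le_trans (trap_value_ratio good_neq_trap p01 a0 q_gt0) _.
have A_ge2 : 2 <= A%:R :> R by rewrite ler_nat.
apply: expr_le_div_powR ratio; first lra.
by case/andP: p01 => p0 _; rewrite divr_ge0 ?(ltW q_gt0).
Qed.
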